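(* Let $n\ge 1$, let $\Omega\subseteq\mathbb R^n$ be open, and let $y:\Omega\to\mathbb R$ be a function of class $C^2$. Let $\mathbf Q$ be an arbitrary real $(n+2)\times(n+2)$ matrix, and suppose that for every $\mathbf x\in\Omega$, $$\mathbf v(\mathbf x)^\top\mathbf Q\,\mathbf v(\mathbf x)=0,\qquad\text{where }\mathbf v(\mathbf x)=\begin{bmatrix}\mathbf x\\ y(\mathbf x)\\ 1\end{bmatrix}\in\mathbb R^{n+2}.$$ Then, with $\mathbf H_y$ the Hessian matrix of $y$ and $\Delta_y$ the discriminant (defined below) of the left-hand side with respect to the variable $y$, the formula $$\det\!\big(\mp\mathbf H_y(\mathbf x)\big)\cdot\Delta_y(\mathbf x)^{n/2+1}=-\det\!\big(\mathbf Q+\mathbf Q^\top\big)$$ holds, where the sign $\mp$ depends on the selected branch of the square root function (i.e. on which root of the quadratic equation in $y$ the function $y$ is).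
   Context: The Hessian matrix $\mathbf H_y(\mathbf x)$ is the $n\times n$ matrix with entries $\partial^2 y/\partial x_i\partial x_j(\mathbf x)$. For fixed $\mathbf x$, the expression $\mathbf w^\top\mathbf Q\mathbf w$ with $\mathbf w=(\mathbf x, t, 1)^\top$ is a polynomial in the scalar variable $t$ of the form $\alpha t^2+\beta(\mathbf x)t+\gamma(\mathbf x)$, where $\alpha=Q_{n+1,n+1}$, $\beta(\mathbf x)=\sum_{i=1}^n (Q_{i,n+1}+Q_{n+1,i})x_i+Q_{n+1,n+2}+Q_{n+2,n+1}$ and $\gamma(\mathbf x)=\sum_{i,j=1}^n Q_{ij}x_ix_j+\sum_{i=1}^n(Q_{i,n+2}+Q_{n+2,i})x_i+Q_{n+2,n+2}$. The discriminant with respect to $y$ is $\Delta_y(\mathbf x)=\beta(\mathbf x)^2-4\alpha\gamma(\mathbf x)$ (a quadratic polynomial in $\mathbf x$). Here $\det$ denotes the determinant and $\Delta_y(\mathbf x)^{n/2+1}$ is the real power of the nonnegative number $\Delta_y(\mathbf x)$. The sign $\mp$ means $\det(-\mathbf H_y)$ or $\det(\mathbf H_y)$ according to the branch: writing (when $\alpha\neq0$) $y=\frac{-\beta\pm\sqrt{\Delta_y}}{2\alpha}$, the sign in the formula is opposite to the sign $\pm$ here; it only matters for odd $n$. *)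

From HB Require Import structures.
From mathcomp Require Import all_boot all_order all_algebra.
From mathcomp Require Import all_classical all_reals all_analysis.
Set Implicit Arguments. Unset Strict Implicit. Unset Printing Implicit Defensive.
Import Order.TTheory GRing.Theory Num.Theory.
Import numFieldNormedType.Exports.
Local Open Scope classical_set_scope.
Local Open Scope ring_scope.

Section Defs.
Variables (R : realType) (n : nat).

Definition evec (i : 'I_n) : 'rV[R]_n := delta_mx 0 i.

Definition partial (i : 'I_n) (f : 'rV[R]_n -> R) (x : 'rV[R]_n) : R :=
  'D_(evec i) f x.

Definition C2_on (Omega : set 'rV[R]_n) (f : 'rV[R]_n -> R) : Prop :=
  (forall x, Omega x -> {for x, continuous f}) /\
  forall i : 'I_n,
    (forall x, Omega x -> derivable f x (evec i)) /\
    (forall x, Omega x -> {for x, continuous (partial i f)}) /\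
    forall j : 'I_n,
      (forall x, Omega x -> derivable (partial i f) x (evec j)) /\
      (forall x, Omega x -> {for x, continuous (partial j (partial i f))}).

Definition hessian (f : 'rV[R]_n -> R) (x : 'rV[R]_n) : 'M[R]_n :=
  \matrix_(i, j) partial j (partial i f) x.

(* indices in 'I_(n+2): x-coordinates, the y-slot (n+1), the constant slot (n+2) *)
Definition ix (i : 'I_n) : 'I_(n + 2) := lshift 2 i.
Definition it : 'I_(n + 2) := rshift n (ord0 : 'I_2).
Definition i1 : 'I_(n + 2) := rshift n (ord_max : 'I_2).

Definition wvec (x : 'rV[R]_n) (t : R) : 'cV[R]_(n + 2) :=
  col_mx x^T (\col_(k < 2) (if k == ord0 then t else 1)).

(* coefficients of w^T Q w = alpha t^2 + beta(x) t + gamma(x) *)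
Definition alpha (Q : 'M[R]_(n + 2)) : R := Q it it.
Definition beta (Q : 'M[R]_(n + 2)) (x : 'rV[R]_n) : R :=
  \sum_(i < n) (Q (ix i) it + Q it (ix i)) * x 0 i + Q it i1 + Q i1 it.
Definition gamma (Q : 'M[R]_(n + 2)) (x : 'rV[R]_n) : R :=
  \sum_(i < n) \sum_(j < n) Q (ix i) (ix j) * x 0 i * x 0 j
  + \sum_(i < n) (Q (ix i) i1 + Q i1 (ix i)) * x 0 i + Q i1 i1.

Definition discr (Q : 'M[R]_(n + 2)) (x : 'rV[R]_n) : R :=
  beta Q x ^+ 2 - 4 * alpha Q * gamma Q x.

End Defs.

(* Put A := Q + Q^T and v := (x, y(x), 1), so that v^T A v = 2 v^T Q v vanishes on
   Omega.  Differentiating once gives v^T A d_i v = 0; differentiating that again,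
   and using d_j d_i v = (d_j d_i y) e_t, gives d_j v^T A d_i v = - g d_j d_i y with
   g := e_t^T A v = 2 alpha y + beta.  In the frame (d_1 v, ..., d_n v, e_t, v), of
   determinant 1, the Gram matrix of A is thus bordered: - g H^T in the upper left
   block, and a last row and column vanishing except for g against e_t.  Hence
   det A = - g^2 (- g)^n det H.  Finally y is a root of the quadratic in t, so
   Delta = g^2 and g = s sqrt Delta. *)

From HB Require Import structures.
From mathcomp Require Import all_boot all_order all_algebra.
From mathcomp Require Import all_classical all_reals all_analysis.
From mathcomp Require Import ring lra.
Import Order.TTheory GRing.Theory Num.Theory.
Import numFieldNormedType.Exports.
Local Open Scope classical_set_scope.
Local Open Scope ring_scope.
Set Implicit Arguments. Unset Strict Implicit. Unset Printing Implicit Defensive.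

Lemma ord2P (j : 'I_2) : j = ord0 \/ j = ord_max.
Proof. by case: j => [[|[|//]]] ?; [left|right]; apply: val_inj. Qed.

Lemma lift0_ord2 : lift ord0 (ord0 : 'I_1) = ord_max :> 'I_2.
Proof. exact: val_inj. Qed.

Lemma det_mx2 (R : comPzRingType) (D : 'M[R]_2) :
  \det D = D ord0 ord0 * D ord_max ord_max - D ord0 ord_max * D ord_max ord0.
Proof.
rewrite (expand_det_row _ ord0) !big_ord_recl big_ord0 addr0 /cofactor !det_mx11.
rewrite !mxE /= expr0 expr1 mul1r mulN1r mulrN lift0_ord2.
by have -> : lift (ord_max : 'I_2) (0 : 'I_1) = ord0 by apply: val_inj.
Qed.

Lemma det_block1 (R : comPzRingType) n1 n2 (X : 'M[R]_(n1, n2)) C D :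
  \det (block_mx 1%:M X C D) = \det (D - C *m X).
Proof.
have -> : block_mx 1%:M X C D =
    block_mx 1%:M 0 C 1%:M *m block_mx 1%:M X 0 (D - C *m X).
  by rewrite mulmx_block !mul1mx !mul0mx !mulmx1 ?mulmx0 !addr0 addrCA subrr addr0.
by rewrite det_mulmx det_lblock det_ublock !det1 !mul1r.
Qed.

Lemma det_bordered (F : fieldType) n (B : 'M[F]_(n + 2)) :
  (forall i, B (lshift 2 i) (rshift n ord_max) = 0) ->
  (forall i, B (rshift n ord_max) (lshift 2 i) = 0) ->
  B (rshift n ord_max) (rshift n ord_max) = 0 ->
  \det B = - (B (rshift n ord0) (rshift n ord_max) * B (rshift n ord_max) (rshift n ord0))
           * \det (ulsubmx B).
Proof.
move=> B_col B_row B_corner.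
set g := B (rshift n ord0) (rshift n ord_max).
have [g0|gN0] := eqVneq g 0.
  rewrite g0 mul0r oppr0 mul0r (expand_det_col _ (rshift n ord_max)) big1 // => k _.
  rewrite -(splitK k); case: (fintype.split k) => [i|j] /=; first by rewrite B_col mul0r.
  by case: (ord2P j) => ->; rewrite ?B_corner -/g ?g0 mul0r.
(* [Y] solves [drsubmx B *m Y = - dlsubmx B], using the pivot [g != 0]. *)
pose Y : 'M[F]_(2, n) :=
  \matrix_(a, i) (if a == ord_max then - g^-1 * B (rshift n ord0) (lshift 2 i) else 0).
have -> : \det B = \det (B *m block_mx 1%:M 0 Y 1%:M).
  by rewrite det_mulmx det_lblock !det1 !mulr1.
rewrite -[B in B *m _]submxK mulmx_block !mulmx0 !mulmx1 !add0r.
have -> : ulsubmx B + ursubmx B *m Y = ulsubmx B.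
  apply/matrixP => i j; rewrite !mxE big_ord_recl big_ord1 !mxE lift0_ord2 /=.
  by rewrite B_col !mul0r mulr0 !addr0.
have -> : dlsubmx B + drsubmx B *m Y = 0.
  apply/matrixP => a i; rewrite !mxE big_ord_recl big_ord1 !mxE lift0_ord2 /= mulr0 add0r.
  case: (ord2P a) => ->; last by rewrite B_row B_corner mul0r addr0.
  by rewrite -/g mulrA mulrN mulfV // mulN1r addrN.
by rewrite det_ublock det_mx2 !mxE B_corner mulr0 sub0r mulrC.
Qed.

Section BilinearForm.
Variable R : comPzRingType.

Definition bform m (A : 'M[R]_m) (u v : 'I_m -> R) : R :=
  \sum_k \sum_l u k * A k l * v l.

Lemma bform_mulmx m r (A : 'M[R]_m) (M : 'M[R]_(m, r)) p q :
  (M^T *m A *m M) p q = bform A (M^~ p) (M^~ q).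
Proof.
rewrite /bform !mxE exchange_big /=; apply: eq_bigr => l _.
by rewrite !mxE big_distrl; apply: eq_bigr => k _; rewrite !mxE.
Qed.

Lemma bformC m (A : 'M[R]_m) u v : A^T = A -> bform A u v = bform A v u.
Proof.
move=> /matrixP symA; rewrite /bform exchange_big.
apply: eq_bigr => l _; apply: eq_bigr => k _.
by move: (symA k l); rewrite mxE => ->; ring.
Qed.

Lemma bformZr m (A : 'M[R]_m) u v c :
  bform A u (fun k => c * v k) = c * bform A u v.
Proof.
rewrite /bform big_distrr; apply: eq_bigr => k _; rewrite big_distrr.
by apply: eq_bigr => l _; rewrite mulrCA.
Qed.

Lemma bform_addtr m (Q : 'M[R]_m) (w : 'cV[R]_m) :
  bform (Q + Q^T) (w^~ 0) (w^~ 0) = 2 * (w^T *m Q *m w) 0 0.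
Proof.
have trK : (w^T *m Q^T *m w) 0 0 = (w^T *m Q *m w) 0 0.
  by rewrite [w^T *m Q^T *m w](_ : _ = (w^T *m Q *m w)^T) ?mxE // !trmx_mul trmxK mulmxA.
by rewrite -bform_mulmx mulmxDr mulmxDl mxE trK; ring.
Qed.

End BilinearForm.

Lemma is_derive_bform (R : realType) (V : normedModType R) m (A : 'M[R]_m)
    (f h : 'I_m -> V -> R) (df dh : 'I_m -> R) (z v : V) :
  (forall k, is_derive z v (f k) (df k)) -> (forall k, is_derive z v (h k) (dh k)) ->
  is_derive z v (fun z => bform A (f^~ z) (h^~ z))
    (bform A df (h^~ z) + bform A (f^~ z) dh).
Proof.
move=> f' h'.
have -> : (fun z => bform A (f^~ z) (h^~ z)) = \sum_k \sum_l A k l *: (f k * h l).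
  apply/funext => z'; rewrite /bform fct_sumE; apply: eq_bigr => k _.
  by rewrite fct_sumE; apply: eq_bigr => l _; rewrite !fctE -[RHS]/(A k l * _); ring.
rewrite /bform -big_split; apply: is_derive_sum => k; rewrite -big_split.
apply: is_derive_sum => l; apply: is_derive_eq.
by rewrite /GRing.scale /=; ring.
Qed.

Lemma is_derive_coord (R : numFieldType) m p (x v : 'M[R]_(m, p)) i j :
  is_derive x v (fun z : 'M[R]_(m, p) => z i j) (v i j).
Proof.
apply: DeriveDef; first exact/diff_derivable/differentiable_coord.
rewrite /derive; apply: cvg_lim => //; apply: cvg_near_cst; near=> h.
have hN0 : h != 0 by near: h; exact: nbhs_dnbhs_neq.
by rewrite /= !mxE addrK scalerA mulVf // scale1r.
Unshelve. all: by end_near. Qed.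

Lemma derive_eq0_open (R : numFieldType) (V : normedModType R) (Omega : set V)
    (f : V -> R) z v :
  open Omega -> Omega z -> (forall z, Omega z -> f z = 0) -> 'D_v f z = 0.
Proof.
move=> Omega_open Oz f0; rewrite (@near_eq_derive _ _ _ _ (cst 0)) ?derive_cst //.
by apply: (filterS _ (open_nbhs_nbhs (conj Omega_open Oz))) => z' /f0.
Qed.

Lemma powR_halfn_add1 (R : realType) (a : R) n : 0 <= a ->
  powR a (n%:R / 2 + 1) = Num.sqrt a ^+ n * a.
Proof.
move=> a_ge0; have n2_1 : n%:R / 2 + 1 != 0 :> R.
  by rewrite gt_eqF // ltr_pwDr // divr_ge0 ?ler0n.
rewrite powRD ?(negbTE n2_1) // powRr1 // [n%:R / 2]mulrC powRrM powR12_sqrt //.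
by rewrite powR_mulrn ?sqrtr_ge0.
Qed.

Section GraphCoordinates.
Variables (R : realType) (n : nat).
Implicit Types (x u : 'rV[R]_n) (t b : R).

Definition cvec u t b : 'cV[R]_(n + 2) :=
  col_mx u^T (\col_(k < 2) (if k == ord0 then t else b)).

Definition tvec : 'I_(n + 2) -> R := (cvec 0 1 0)^~ 0.

Lemma wvecE x t : wvec x t = cvec x t 1.
Proof. by []. Qed.

Lemma cvec_x u t b i : cvec u t b (ix i) 0 = u 0 i.
Proof. by rewrite col_mxEu mxE. Qed.

Lemma cvec_t u t b : cvec u t b (it n) 0 = t.
Proof. by rewrite col_mxEd mxE. Qed.

Lemma cvec_1 u t b : cvec u t b (i1 n) 0 = b.
Proof. by rewrite col_mxEd mxE. Qed.

Lemma cvec0 t k : cvec 0 t 0 k 0 = t * tvec k.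
Proof.
rewrite -(splitK k); case: (fintype.split k) => [i|j] /=.
  by rewrite /tvec !cvec_x mxE mulr0.
by case: (ord2P j) => ->; rewrite /tvec ?cvec_t ?cvec_1 ?mulr1 ?mulr0.
Qed.

Lemma big_ord_add2 (F : 'I_(n + 2) -> R) :
  \sum_k F k = \sum_i F (ix i) + F (it n) + F (i1 n).
Proof. by rewrite big_split_ord /= big_ord_recl big_ord1 addrA lift0_ord2. Qed.

Lemma quadE (Q : 'M[R]_(n + 2)) x t :
  ((wvec x t)^T *m Q *m wvec x t) 0 0 = alpha Q * t ^+ 2 + beta Q x * t + gamma Q x.
Proof.
rewrite wvecE bform_mulmx /bform big_ord_add2.
under eq_bigr do rewrite big_ord_add2 !cvec_x cvec_t cvec_1.
under eq_bigr => i _ do under eq_bigr => j _ do rewrite cvec_x.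
rewrite !big_ord_add2 !cvec_t !cvec_1 !big_split /= /alpha /beta /gamma.
under [X in _ = _ + (X + _ + _) * t + _]eq_bigr do rewrite mulrDl.
under [X in _ = _ + _ + (_ + X + _)]eq_bigr do rewrite mulrDl.
rewrite !big_split /=.
have -> : \sum_i x 0 i * Q (ix i) (it n) * t = t * \sum_i Q (ix i) (it n) * x 0 i.
  by rewrite big_distrr; apply: eq_bigr => i _ /=; ring.
have -> : \sum_i t * Q (it n) (ix i) * cvec x t 1 (ix i) 0 = t * \sum_i Q (it n) (ix i) * x 0 i.
  by rewrite big_distrr; apply: eq_bigr => i _ /=; rewrite cvec_x; ring.
have -> : \sum_i x 0 i * Q (ix i) (i1 n) * 1 = \sum_i Q (ix i) (i1 n) * x 0 i.
  by apply: eq_bigr => i _ /=; ring.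
have -> : \sum_i 1 * Q (i1 n) (ix i) * cvec x t 1 (ix i) 0 = \sum_i Q (i1 n) (ix i) * x 0 i.
  by apply: eq_bigr => i _ /=; rewrite cvec_x; ring.
under eq_bigr => i _ do under eq_bigr => j _ do rewrite (mulrC (x 0 i)).
ring.
Qed.

Lemma bform_tvec_wvec (Q : 'M[R]_(n + 2)) x t :
  bform (Q + Q^T) tvec ((wvec x t)^~ 0) = 2 * alpha Q * t + beta Q x.
Proof.
rewrite /bform big_ord_add2 big1 => [|i _]; last first.
  by rewrite big1 // => l _; rewrite /tvec cvec_x mxE !mul0r.
rewrite /tvec cvec_t cvec_1 [X in _ + X = _]big1 => [|l _]; last by rewrite !mul0r.
rewrite big_ord_add2 wvecE cvec_t cvec_1 /alpha /beta !mxE.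
under eq_bigr do rewrite cvec_x !mxE mul1r addrC.
by rewrite add0r addr0 !mul1r mulr1; ring.
Qed.

Lemma discr_root (Q : 'M[R]_(n + 2)) x t :
  alpha Q * t ^+ 2 + beta Q x * t + gamma Q x = 0 ->
  discr Q x = (2 * alpha Q * t + beta Q x) ^+ 2.
Proof.
move=> root_t; rewrite /discr.
have -> : gamma Q x = - (alpha Q * t ^+ 2 + beta Q x * t) by lra.
by ring.
Qed.

Lemma is_derive_cvec (V : normedModType R) (u : V -> 'rV[R]_n) (f : V -> R) b
    (z v : V) (du : 'rV[R]_n) df k :
  (forall i, is_derive z v (fun z => u z 0 i) (du 0 i)) -> is_derive z v f df ->
  is_derive z v (fun z => cvec (u z) (f z) b k 0) (cvec du df 0 k 0).
Proof.
move=> u' f'; rewrite -(splitK k); case: (fintype.split k) => [i|j] /=.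
  have -> : (fun z => cvec (u z) (f z) b (ix i) 0) = (fun z => u z 0 i).
    by apply/funext => ?; rewrite cvec_x.
  by rewrite cvec_x.
case: (ord2P j) => ->.
  have -> : (fun z => cvec (u z) (f z) b (it n) 0) = f.
    by apply/funext => ?; rewrite cvec_t.
  by rewrite cvec_t.
have -> : (fun z => cvec (u z) (f z) b (i1 n) 0) = cst b.
  by apply/funext => ?; rewrite cvec_1.
by rewrite cvec_1; apply: is_derive_cst.
Qed.

End GraphCoordinates.

Arguments tvec {R n}.

Section QuadricGraph.
Variables (R : realType) (n : nat) (Omega : set 'rV[R]_n) (y : 'rV[R]_n -> R).
Variable Q : 'M[R]_(n + 2).
Hypothesis Omega_open : open Omega.
Hypothesis y_derivable : forall i z, Omega z -> derivable y z (evec R i).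
Hypothesis y_quadric :
  forall z, Omega z -> ((wvec z (y z))^T *m Q *m wvec z (y z)) 0 0 = 0.

Local Notation A := (Q + Q^T).

Let A_sym : A^T = A. Proof. by rewrite linearD /= trmxK addrC. Qed.

Definition vy z : 'I_(n + 2) -> R := (wvec z (y z))^~ 0.
Definition dvy i z : 'I_(n + 2) -> R := (cvec (evec R i) (partial i y z) 0)^~ 0.

Lemma is_derive_vy i z : Omega z ->
  forall k, is_derive z (evec R i) (vy^~ k) (dvy i z k).
Proof.
move=> Oz k; apply: is_derive_cvec => [j|]; first exact: is_derive_coord.
exact/derivableP/y_derivable.
Qed.

Lemma is_derive_dvy i j x : derivable (partial i y) x (evec R j) ->
  forall k, is_derive x (evec R j) ((dvy i)^~ k) (hessian y x i j * tvec k).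
Proof.
move=> dij k; rewrite mxE -cvec0; apply: is_derive_cvec => [l|]; last exact: derivableP.
by apply: is_derive_eq (is_derive_cst _ _ _) _; rewrite mxE.
Qed.

Lemma bform_vy_vy z : Omega z -> bform A (vy z) (vy z) = 0.
Proof. by move=> Oz; rewrite bform_addtr y_quadric ?mulr0. Qed.

Lemma bform_vy_dvy i z : Omega z -> bform A (vy z) (dvy i z) = 0.
Proof.
move=> Oz; have [_ D] := is_derive_bform A (is_derive_vy i Oz) (is_derive_vy i Oz).
have := derive_eq0_open (evec R i) Omega_open Oz bform_vy_vy.
by rewrite D (bformC _ _ A_sym); lra.
Qed.

Lemma bform_dvy_dvy i j x : Omega x -> derivable (partial i y) x (evec R j) ->
  bform A (dvy j x) (dvy i x) = - hessian y x i j * (2 * alpha Q * y x + beta Q x).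
Proof.
move=> Ox dij; have [_ D] := is_derive_bform A (is_derive_vy j Ox) (is_derive_dvy dij).
have := derive_eq0_open (evec R j) Omega_open Ox (fun z Oz => bform_vy_dvy i Oz).
by rewrite D bformZr (bformC (vy x) tvec A_sym) bform_tvec_wvec; lra.
Qed.

Definition frame x : 'M[R]_(n + 2) :=
  row_mx (\matrix_(k, i) dvy i x k) (\matrix_(k, j) if j == ord0 then tvec k else vy x k).

Lemma frame_x x k i : frame x k (ix i) = dvy i x k.
Proof. by rewrite row_mxEl mxE. Qed.

Lemma frame_t x k : frame x k (it n) = tvec k.
Proof. by rewrite row_mxEr mxE. Qed.

Lemma frame_1 x k : frame x k (i1 n) = vy x k.
Proof. by rewrite row_mxEr mxE. Qed.

Lemma det_frame x : \det (frame x) = 1.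
Proof.
move: (frame_x x) (frame_t x) (frame_1 x); move: (frame x) => F Fx Ft F1.
have -> : F = block_mx 1%:M (ursubmx F) (dlsubmx F) (drsubmx F).
  rewrite -[LHS]submxK; congr block_mx.
  by apply/matrixP => i j; rewrite !mxE Fx /dvy cvec_x !mxE eq_sym.
have ur0 j : ursubmx F j ord0 = 0 by rewrite !mxE Ft /tvec cvec_x mxE.
have dl0 j : dlsubmx F ord_max j = 0 by rewrite !mxE Fx /dvy cvec_1.
rewrite det_block1 det_mx2 !mxE.
rewrite [X in (_ - X) * _ - _]big1 => [|j _]; last by rewrite ur0 mulr0.
rewrite [X in _ * (_ - X) - _]big1 => [|j _]; last by rewrite dl0 mul0r.
rewrite [X in _ - _ * (_ - X)]big1 => [|j _]; last by rewrite ur0 mulr0.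
by rewrite !Ft F1 /tvec /vy !cvec_t !cvec_1 !subr0 mulr0 subr0 mulr1.
Qed.

Lemma det_addtr_hessian x : Omega x ->
    (forall i j, derivable (partial i y) x (evec R j)) ->
  let g := 2 * alpha Q * y x + beta Q x in
  \det A = - g ^+ 2 * (- g) ^+ n * \det (hessian y x).
Proof.
move=> Ox y2 g.
have col_x i : (frame x)^~ (ix i) = dvy i x by apply/funext => k; exact: frame_x.
have col_t : (frame x)^~ (it n) = tvec by apply/funext => k; exact: frame_t.
have col_1 : (frame x)^~ (i1 n) = vy x by apply/funext => k; exact: frame_1.
have -> : \det A = \det ((frame x)^T *m A *m frame x).
  by rewrite !det_mulmx det_tr det_frame mul1r mulr1.
rewrite det_bordered => [|i|i|]; rewrite ?bform_mulmx ?col_x ?col_t ?col_1.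
- have -> : ulsubmx ((frame x)^T *m A *m frame x) = - g *: (hessian y x)^T.
    apply/matrixP => i j.
    by rewrite mxE [usubmx _ _ _]mxE bform_mulmx !col_x bform_dvy_dvy // !mxE -/g; ring.
  rewrite (bformC (vy x) tvec A_sym) bform_tvec_wvec detZ det_tr -/g.
  by rewrite expr2 mulrA.
- by rewrite (bformC (dvy i x) (vy x) A_sym) bform_vy_dvy.
- exact: bform_vy_dvy.
- exact: bform_vy_vy.
Qed.

End QuadricGraph.

Theorem theorem1 (R : realType) (n : nat) (hn : (1 <= n)%N)
  (Omega : set 'rV[R]_n) (hOmega : open Omega)
  (y : 'rV[R]_n -> R) (hy : C2_on Omega y)
  (Q : 'M[R]_(n + 2))
  (hQ : forall x, Omega x -> ((wvec x (y x))^T *m Q *m wvec x (y x)) 0 0 = 0) :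
  forall (x : 'rV[R]_n) (s : R), Omega x ->
    (s = 1 \/ s = -1) ->
    2 * alpha Q * y x + beta Q x = s * Num.sqrt (discr Q x) ->
    \det (- s *: hessian y x) * powR (discr Q x) (n%:R / 2 + 1)
      = - \det (Q + Q^T).
Proof.
move=> x s Ox s_sign root_s; have [_ y_C2] := hy.
have y1 i z (Oz : Omega z) : derivable y z (evec R i) := (y_C2 i).1 z Oz.
have y2 i j : derivable (partial i y) x (evec R j) := ((y_C2 i).2.2 j).1 x Ox.
have discr_sq : discr Q x = (2 * alpha Q * y x + beta Q x) ^+ 2.
  by apply: discr_root; rewrite -quadE hQ.
have discr_ge0 : 0 <= discr Q x by rewrite discr_sq sqr_ge0.
rewrite (det_addtr_hessian hOmega y1 hQ Ox y2) /= powR_halfn_add1 // root_s detZ.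
set r := Num.sqrt _; rewrite -[discr Q x](sqr_sqrtr discr_ge0) -/r.
by rewrite -[- (s * r)]mulNr !exprMn; case: s_sign => ->; ring.
Qed.
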